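(* Every Abel sequentially compact subset of $\mathbb{R}$ is slowly oscillating compact.
   Context: A sequence $(p_n)_{n\ge0}$ is Abel convergent to $\ell$ if $\sum_{k=0}^{\infty}p_k x^k$ converges for every $0\le x<1$ and $\lim_{x\to 1^-}(1-x)\sum_{k=0}^{\infty}p_k x^k=\ell$. A subset $F\subseteq\mathbb{R}$ is Abel sequentially compact if every sequence of points of $F$ has a subsequence Abel convergent to a limit belonging to $F$. A sequence $(p_n)$ is slowly oscillating if for every $\varepsilon>0$ there exist $\delta>0$ and $N$ such that $|p_m-p_n|<\varepsilon$ whenever $n\ge N$ and $n\le m\le(1+\delta)n$. A subset $E\subseteq\mathbb{R}$ is slowly oscillating compact if every sequence of points of $E$ has a slowly oscillating subsequence. *)

From Stdlib Require Import Reals.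
From Coquelicot Require Import Coquelicot.
Open Scope R_scope.

Definition abel_convergent (p : nat -> R) (l : R) : Prop :=
  (forall x : R, 0 <= x < 1 -> ex_series (fun k => p k * x ^ k)) /\
  filterlim (fun x : R => (1 - x) * Series (fun k => p k * x ^ k))
            (at_left 1) (locally l).

Definition strictly_increasing (phi : nat -> nat) : Prop :=
  forall n : nat, (phi n < phi (S n))%nat.

Definition abel_seq_compact (F : R -> Prop) : Prop :=
  forall p : nat -> R, (forall n, F (p n)) ->
    exists phi : nat -> nat, strictly_increasing phi /\
      exists l : R, F l /\ abel_convergent (fun n => p (phi n)) l.

Definition slowly_oscillating (p : nat -> R) : Prop :=
  forall eps : R, 0 < eps ->
    exists delta : R, 0 < delta /\ exists N : nat,
      forall n m : nat, (N <= n)%nat -> (n <= m)%nat ->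
        INR m <= (1 + delta) * INR n -> Rabs (p m - p n) < eps.

Definition slowly_oscillating_compact (E : R -> Prop) : Prop :=
  forall p : nat -> R, (forall n, E (p n)) ->
    exists phi : nat -> nat, strictly_increasing phi /\
      slowly_oscillating (fun n => p (phi n)).

From Stdlib Require Import Reals Lra Lia Classical ClassicalChoice
  FunctionalExtensionality.
From Coquelicot Require Import Coquelicot.
Open Scope R_scope.

(* An Abel sequentially compact set is bounded. Indeed a sequence with
   [p n >= n] has every subsequence dominating its index, and for such a [q]
   the Abel mean satisfies [(1-x) sum q_k x^k >= M x^M] for every [M]; at
   [x = 1 - 1/(2M)] Bernoulli's inequality makes this at least [M/2], so the
   Abel means are unbounded near [1]. A bounded sequence has a convergent
   subsequence by Bolzano-Weierstrass, and a Cauchy sequence is slowly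
   oscillating (already with [delta = 1]). *)

Lemma INR_unbounded (r : R) : exists n : nat, r < INR n.
Proof.
  destruct (nfloor_ex (Rabs r) (Rabs_pos r)) as [n Hn].
  exists (S n). rewrite S_INR. pose proof (Rle_abs r). lra.
Qed.

Lemma pow_1_minus_ge (h : R) (n : nat) :
  0 <= h <= 1 -> 1 - INR n * h <= (1 - h) ^ n.
Proof.
  intros Hh. induction n as [|n IH].
  - simpl. lra.
  - rewrite S_INR. simpl. pose proof (pos_INR n). nra.
Qed.

Lemma strictly_increasing_ge_id (phi : nat -> nat) :
  strictly_increasing phi -> forall k, (k <= phi k)%nat.
Proof.
  intros Hphi k. induction k as [|k IH]; [lia|]. specialize (Hphi k). lia.
Qed.

Lemma abel_mean_ge_tail (q : nat -> R) (x : R) (M : nat) :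
  (0 < M)%nat -> (forall k, INR k <= q k) -> 0 <= x < 1 ->
  ex_series (fun k => q k * x ^ k) ->
  INR M * x ^ M <= (1 - x) * Series (fun k => q k * x ^ k).
Proof.
  intros HM Hq Hx Hex.
  assert (Hxk : forall k, 0 <= x ^ k) by (intros k; apply pow_le; lra).
  rewrite (Series_incr_n _ M HM Hex).
  assert (Hhead : 0 <= sum_f_R0 (fun k => q k * x ^ k) (Init.Nat.pred M)).
  { apply cond_pos_sum. intros k.
    pose proof (Hq k). pose proof (pos_INR k). pose proof (Hxk k). nra. }
  (* the tail dominates [M x^M sum_k x^k = M x^M / (1 - x)] *)
  assert (Htail : INR M * x ^ M * / (1 - x)
                  <= Series (fun k => q (M + k)%nat * x ^ (M + k))).
  { rewrite <- Series_geom by (rewrite Rabs_pos_eq; lra).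
    rewrite <- Series_scal_l.
    apply Series_le.
    - intros k. pose proof (Hxk k). pose proof (Hxk M). pose proof (pos_INR M).
      split; [repeat apply Rmult_le_pos; lra|].
      assert (INR M <= q (M + k)%nat).
      { apply Rle_trans with (INR (M + k)); [apply le_INR; lia | apply Hq]. }
      rewrite pow_add.
      rewrite Rmult_assoc.
      apply Rmult_le_compat_r; [apply Rmult_le_pos|]; auto.
    - exact (proj1 (ex_series_incr_n _ M) Hex). }
  assert (Hsplit : INR M * x ^ M = (1 - x) * (INR M * x ^ M * / (1 - x)))
    by (field; lra).
  nra.
Qed.

Lemma abel_mean_unbounded (q : nat -> R) :
  (forall k, INR k <= q k) ->
  (forall x, 0 <= x < 1 -> ex_series (fun k => q k * x ^ k)) ->
  forall B d, 0 < d ->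
    exists x, 1 - d < x < 1 /\ B < (1 - x) * Series (fun k => q k * x ^ k).
Proof.
  intros Hq Hex B d Hd.
  destruct (INR_unbounded (2 * Rabs B)) as [M HM].
  pose proof (Rabs_pos B) as HB.
  assert (HM0 : (0 < M)%nat) by (destruct M; [simpl in HM; lra | lia]).
  pose proof (lt_0_INR _ HM0) as HMpos.
  set (h := Rmin (d / 2) (/ (2 * INR M))).
  assert (Hh : 0 < h) by (apply Rmin_glb_lt; [lra | apply Rinv_0_lt_compat; lra]).
  assert (HMh : INR M * h <= / 2).
  { replace (/ 2) with (INR M * / (2 * INR M)) by (field; lra).
    apply Rmult_le_compat_l; [lra | apply Rmin_r]. }
  assert (Hh1 : h <= 1) by (assert (1 <= INR M) by (apply (le_INR 1); lia); nra).
  exists (1 - h). split.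
  - assert (h <= d / 2) by apply Rmin_l. lra.
  - pose proof (abel_mean_ge_tail q (1 - h) M HM0 Hq ltac:(lra)
                  (Hex (1 - h) ltac:(lra))) as Hmean.
    pose proof (pow_1_minus_ge h M ltac:(lra)) as Hpow.
    assert (INR M * / 2 <= INR M * (1 - h) ^ M) by (apply Rmult_le_compat_l; lra).
    pose proof (Rle_abs B). lra.
Qed.

Lemma not_abel_convergent_ge_id (q : nat -> R) (l : R) :
  (forall k, INR k <= q k) -> ~ abel_convergent q l.
Proof.
  intros Hq [Hex Hlim].
  assert (Hnear : at_left 1 (fun x =>
            Rabs ((1 - x) * Series (fun k => q k * x ^ k) - l) < 1)).
  { apply (Hlim (fun y => Rabs (y - l) < 1)).
    exists (mkposreal 1 Rlt_0_1). intros y Hy. exact Hy. }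
  destruct Hnear as [d Hd].
  destruct (abel_mean_unbounded q Hq Hex (Rabs l + 1) d (cond_pos d))
    as [x [Hx Hbig]].
  assert (Hball : ball 1 d x).
  { change (Rabs (x - 1) < d). rewrite Rabs_left1; lra. }
  specialize (Hd x Hball (proj2 Hx)).
  apply Rabs_lt_between in Hd. pose proof (Rle_abs l). lra.
Qed.

Lemma abel_convergent_opp (q : nat -> R) (l : R) :
  abel_convergent q l -> abel_convergent (fun k => - q k) (- l).
Proof.
  intros [Hex Hlim]. split.
  - intros x Hx. eapply ex_series_ext; [|exact (ex_series_opp _ (Hex x Hx))].
    intros k. unfold opp; simpl. ring.
  - eapply filterlim_ext;
      [|exact (filterlim_comp _ _ _ _ opp _ _ _ Hlim (filterlim_opp l))].
    intros x. unfold opp; simpl.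
    rewrite (Series_ext (fun k => - q k * x ^ k) (fun k => - (q k * x ^ k)))
      by (intros; ring).
    rewrite Series_opp. ring.
Qed.

Lemma abel_seq_compact_opp (F : R -> Prop) :
  abel_seq_compact F -> abel_seq_compact (fun x => F (- x)).
Proof.
  intros HF p Hp.
  destruct (HF (fun n => - p n) Hp) as [phi [Hphi [l [Hl Habel]]]].
  exists phi. split; [exact Hphi|]. exists (- l). split.
  - rewrite Ropp_involutive. exact Hl.
  - replace (fun n => p (phi n)) with (fun n => - - p (phi n))
      by (apply functional_extensionality; intros; apply Ropp_involutive).
    exact (abel_convergent_opp _ _ Habel).
Qed.

Lemma abel_seq_compact_bounded_above (F : R -> Prop) :
  abel_seq_compact F -> exists U, forall x, F x -> x <= U.
Proof.
  intros HF. apply NNPP. intros Hunb.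
  assert (Hbig : forall n : nat, exists x, F x /\ INR n <= x).
  { intros n. apply NNPP. intros Hno. apply Hunb. exists (INR n). intros x Fx.
    apply Rnot_lt_le. intros Hlt. apply Hno. exists x. split; [exact Fx | lra]. }
  destruct (choice _ Hbig) as [p Hp].
  destruct (HF p (fun n => proj1 (Hp n))) as [phi [Hphi [l [_ Habel]]]].
  apply (not_abel_convergent_ge_id (fun n => p (phi n)) l); [|exact Habel].
  intros k. apply Rle_trans with (INR (phi k)); [|exact (proj2 (Hp (phi k)))].
  apply le_INR, strictly_increasing_ge_id, Hphi.
Qed.

Lemma abel_seq_compact_bounded (F : R -> Prop) :
  abel_seq_compact F -> exists L U, forall x, F x -> L <= x <= U.
Proof.
  intros HF.
  destruct (abel_seq_compact_bounded_above F HF) as [U HU].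
  destruct (abel_seq_compact_bounded_above _ (abel_seq_compact_opp F HF))
    as [V HV].
  exists (- V), U. intros x Fx. split; [|exact (HU x Fx)].
  assert (- x <= V) by (apply HV; rewrite Ropp_involutive; exact Fx). lra.
Qed.

Section ClusterPoint.

Variables (p : nat -> R) (l : R).
Hypothesis Hl : ValAdh p l.

Lemma ValAdh_near_index :
  exists g : nat -> nat, forall N, (N <= g N)%nat /\ Rabs (p (g N) - l) < / INR (S N).
Proof.
  apply (choice (fun N n => (N <= n)%nat /\ Rabs (p n - l) < / INR (S N))). intros N.
  assert (Hpos : 0 < / INR (S N)) by (apply Rinv_0_lt_compat, lt_0_INR; lia).
  destruct (Hl (fun y => Rabs (y - l) < / INR (S N)) N) as [n Hn].
  - exists (mkposreal _ Hpos). intros y Hy. exact Hy.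
  - exists n. exact Hn.
Qed.

Lemma ValAdh_subsequence :
  exists phi, strictly_increasing phi /\ Un_cv (fun n => p (phi n)) l.
Proof.
  destruct ValAdh_near_index as [g Hg].
  (* [phi k] is [g] at an argument [>= k], hence within [1/(k+1)] of [l] *)
  set (phi := fix phi k := match k with O => g O | S k' => g (S (phi k')) end).
  assert (Hphi : strictly_increasing phi).
  { intros k. simpl. pose proof (proj1 (Hg (S (phi k)))). lia. }
  assert (Hclose : forall k, Rabs (p (phi k) - l) < / INR (S k)).
  { intros [|k]; [exact (proj2 (Hg O))|].
    apply Rlt_le_trans with (/ INR (S (S (phi k)))); [exact (proj2 (Hg _))|].
    apply Rinv_le_contravar; [apply lt_0_INR; lia|].
    apply le_INR. pose proof (strictly_increasing_ge_id phi Hphi k). lia. }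
  exists phi. split; [exact Hphi|].
  intros eps Heps.
  destruct (archimed_cor1 eps Heps) as [N [HN HN0]].
  exists N. intros k Hk. unfold Rdist.
  apply Rlt_trans with (/ INR (S k)); [apply Hclose|].
  apply Rle_lt_trans with (/ INR N); [|exact HN].
  apply Rinv_le_contravar; [apply lt_0_INR; lia | apply le_INR; lia].
Qed.

End ClusterPoint.

Lemma Cauchy_slowly_oscillating (p : nat -> R) :
  Cauchy_crit p -> slowly_oscillating p.
Proof.
  intros Hp eps Heps. exists 1. split; [lra|].
  destruct (Hp eps Heps) as [N HN]. exists N.
  intros n m Hn Hnm _. apply HN; lia.
Qed.

Theorem corollary17 (F : R -> Prop) :
  abel_seq_compact F -> slowly_oscillating_compact F.
Proof.
  intros HF p Hp.
  destruct (abel_seq_compact_bounded F HF) as [L [U HLU]].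
  destruct (Bolzano_Weierstrass p (fun c => L <= c <= U) (compact_P3 L U)
              (fun n => HLU _ (Hp n))) as [l Hl].
  destruct (ValAdh_subsequence p l Hl) as [phi [Hphi Hcv]].
  exists phi. split; [exact Hphi|].
  apply Cauchy_slowly_oscillating, CV_Cauchy. exists l. exact Hcv.
Qed.
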